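(* Let $X$ be a simplicial complex with vertex set $V$ and $1$-skeleton $\mathcal G$, and let $\hat d$ be a metric on $V$ such that for some constant $C>0$, $\hat d(u,v)\le C\,d_{\mathcal G}(u,v)$ for all $u,v\in V$. If $x,y\in X$ have disjoint supports, then \[\hat D(x,y)\le 3C\,d_X(x,y).\]
   Context: Points $x\in X$ have barycentric coordinates $(x_u)_{u\in V}$ (finitely many nonzero, summing to $1$); $\mathrm{supp}(x)=\{u\in V:x_u\neq0\}$. $\hat D(x,y)=\sum_{u,v\in V}x_uy_v\,\hat d(u,v)$. $d_{\mathcal G}$ is the word metric on the $1$-skeleton (every edge length $1$). For a simplex $\sigma$ and $x,y\in\sigma$, $d_\sigma(x,y)=\tfrac12\sum_{u\in V(\sigma)}|x_u-y_u|$; a path from $x$ to $y$ is a sequence $x=a_0,\dots,a_r=y$ with consecutive points in a common simplex $\sigma_i$, of length $\sum_i d_{\sigma_i}(a_{i-1},a_i)$; the $\ell^1$-path metric $d_X(x,y)$ is the infimum of lengths of such paths. *)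

From Stdlib Require Import Reals List.
Import ListNotations.
Open Scope R_scope.
Set Implicit Arguments.

Definition lsum {V : Type} (f : V -> R) (l : list V) : R :=
  fold_right (fun u acc => f u + acc) 0 l.

Record SComplex (V : Type) := {
  simplex : list V -> Prop;
  simplex_nonempty : forall s, simplex s -> s <> nil;
  simplex_sub : forall s t, simplex s -> t <> nil -> incl t s -> simplex t;
  simplex_vert : forall v, simplex [v]
}.

Definition is_metric {V : Type} (d : V -> V -> R) : Prop :=
  (forall u v, 0 <= d u v) /\
  (forall u v, d u v = 0 <-> u = v) /\
  (forall u v, d u v = d v u) /\
  (forall u v w, d u w <= d u v + d v w).

Inductive walk {V : Type} (K : SComplex V) : V -> V -> nat -> Prop :=
| walk_nil : forall u, walk K u u 0
| walk_cons : forall u w v n, simplex K [u; w] -> walk K w v n -> walk K u v (S n).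

(* d_G(u,v) = n : word metric on the 1-skeleton (edge length 1). *)
Definition dG_is {V : Type} (K : SComplex V) (u v : V) (n : nat) : Prop :=
  walk K u v n /\ (forall m, walk K u v m -> (n <= m)%nat).

(* x (barycentric coordinates) is a point of the simplex sigma
   (sigma a simplex listed without repetition). *)
Definition in_simplex {V : Type} (K : SComplex V) (sigma : list V) (x : V -> R) : Prop :=
  simplex K sigma /\ NoDup sigma /\
  (forall u, 0 <= x u) /\
  (forall u, x u <> 0 -> In u sigma) /\
  lsum x sigma = 1.

Definition is_point {V : Type} (K : SComplex V) (x : V -> R) : Prop :=
  exists sigma, in_simplex K sigma x.

Definition d_simplex {V : Type} (sigma : list V) (x y : V -> R) : R :=
  / 2 * lsum (fun u => Rabs (x u - y u)) sigma.

(* is_path K x y L : there is a path x = a_0, ..., a_r = y (consecutive points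
   in a common simplex sigma_i) of length L = sum_i d_{sigma_i}(a_{i-1}, a_i). *)
Inductive is_path {V : Type} (K : SComplex V) : (V -> R) -> (V -> R) -> R -> Prop :=
| path_nil : forall x, is_point K x -> is_path K x x 0
| path_cons : forall x a y sigma L,
    in_simplex K sigma x -> in_simplex K sigma a -> is_path K a y L ->
    is_path K x y (d_simplex sigma x a + L).

Definition dX_is {V : Type} (K : SComplex V) (x y : V -> R) (d : R) : Prop :=
  (forall L, is_path K x y L -> d <= L) /\
  (forall d', (forall L, is_path K x y L -> d' <= L) -> d' <= d).

(* \hat D(x,y) = sum_{u,v} x_u y_v dhat(u,v), with the sums taken over
   (duplicate-free) lists sx, sy containing the supports of x and y. *)
Definition Dhat {V : Type} (dh : V -> V -> R) (x : V -> R) (sx : list V)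
  (y : V -> R) (sy : list V) : R :=
  lsum (fun u => lsum (fun v => x u * y v * dh u v) sy) sx.

(* Extend a vertex function f barycentrically to points,
   bary f x = sum_w f(w) x_w.  If f varies by at most c on every simplex,
   then on a simplex sigma the difference bary f x - bary f a equals
   sum_w (f w - m - c/2)(x_w - a_w) for m = min f over sigma (both weights
   sum to 1), whence |bary f x - bary f a| <= c * d_sigma(x,a); summing along
   a path, bary f is c-Lipschitz for path length.  Two instances give the
   theorem for every path of length L from x to y:
   - f = indicator of supp(x), c = 1: it is 1 at x and 0 at y, so L >= 1;
   - f = dhat(u,.) with u a vertex of the simplex of x, c = C (adjacent vertices are at
     dhat-distance <= C): bary f x <= C, hence bary f y <= C + C L.
   Averaging the second bound over u gives Dhat(x,y) <= C(1+L) <= 3 C L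
   (the argument even gives 2 C L), and taking the infimum over paths gives
   Dhat(x,y) <= 3 C d_X(x,y). *)
From Stdlib Require Import Reals List Lra Permutation Classical.
Open Scope R_scope.
Import ListNotations.

Lemma lsum_ext {V : Type} (f g : V -> R) (l : list V) :
  (forall u, In u l -> f u = g u) -> lsum f l = lsum g l.
Proof.
  induction l as [|a l IH]; simpl; intros H; auto.
  rewrite H, IH; auto.
Qed.

Lemma lsum_le {V : Type} (f g : V -> R) (l : list V) :
  (forall u, In u l -> f u <= g u) -> lsum f l <= lsum g l.
Proof.
  induction l as [|a l IH]; simpl; intros H; [lra|].
  assert (f a <= g a) by auto.
  assert (lsum f l <= lsum g l) by auto.
  lra.
Qed.

Lemma lsum_scal {V : Type} (f : V -> R) (c : R) (l : list V) :
  lsum (fun u => c * f u) l = c * lsum f l.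
Proof. induction l as [|a l IH]; simpl; [ring|]. rewrite IH; ring. Qed.

Lemma lsum_abs {V : Type} (f : V -> R) (l : list V) :
  Rabs (lsum f l) <= lsum (fun u => Rabs (f u)) l.
Proof.
  induction l as [|a l IH]; simpl.
  - rewrite Rabs_R0; lra.
  - eapply Rle_trans; [apply Rabs_triang|]. lra.
Qed.

Lemma lsum_perm {V : Type} (f : V -> R) (l1 l2 : list V) :
  Permutation l1 l2 -> lsum f l1 = lsum f l2.
Proof. induction 1; simpl; lra. Qed.

Lemma lsum_shift_diff {V : Type} (f x a : V -> R) (c : R) (l : list V) :
  lsum x l = lsum a l ->
  lsum (fun w => f w * x w) l - lsum (fun w => f w * a w) l =
  lsum (fun w => (f w - c) * (x w - a w)) l.
Proof.
  intros Hmass.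
  assert (E : forall l, lsum (fun w => f w * x w) l - lsum (fun w => f w * a w) l =
    lsum (fun w => (f w - c) * (x w - a w)) l + c * (lsum x l - lsum a l)).
  { induction l0 as [|b l0 IH]; simpl; [ring|].
    match goal with |- ?A - ?B = _ =>
      replace (A - B) with ((f b * x b - f b * a b) +
        (lsum (fun w => f w * x w) l0 - lsum (fun w => f w * a w) l0)) by ring end.
    rewrite IH; ring. }
  rewrite E, Hmass; ring.
Qed.

Lemma lsum_support_indep {V : Type} (g : V -> R) (l1 l2 : list V) :
  NoDup l1 -> NoDup l2 ->
  (forall u, g u <> 0 -> In u l1) -> (forall u, g u <> 0 -> In u l2) ->
  lsum g l1 = lsum g l2.
Proof.
  set (nz := fun u => if Req_EM_T (g u) 0 then false else true).
  assert (Hfilter : forall l, lsum g l = lsum g (filter nz l)).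
  { induction l as [|a l IH]; simpl; auto.
    unfold nz at 1; destruct (Req_EM_T (g a) 0) as [E|E]; simpl.
    - rewrite E, IH; ring.
    - rewrite IH; auto. }
  intros N1 N2 H1 H2. rewrite (Hfilter l1), (Hfilter l2).
  apply lsum_perm, NoDup_Permutation; try apply NoDup_filter; auto.
  intro u; rewrite !filter_In; unfold nz.
  destruct (Req_EM_T (g u) 0); split; intros [Hin Hnz];
    try discriminate; split; auto.
Qed.

Lemma list_argmin {V : Type} (f : V -> R) (l : list V) :
  l <> nil -> exists m, In m l /\ forall w, In w l -> f m <= f w.
Proof.
  induction l as [|a l IH]; intros H; [congruence|].
  destruct l as [|b l].
  - exists a; split; [left; auto|]. intros w [<-|[]]; lra.
  - destruct IH as [m [Hm Hmin]]; [discriminate|].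
    destruct (Rle_dec (f a) (f m)).
    + exists a; split; [left; auto|].
      intros w [<-|Hw]; [lra|]. specialize (Hmin w Hw); lra.
    + exists m; split; [right; auto|]. intros w [<-|Hw]; [lra|auto].
Qed.

Definition bary {V : Type} (f : V -> R) (x : V -> R) (s : list V) : R :=
  lsum (fun w => f w * x w) s.

Lemma bary_le {V : Type} (f : V -> R) (b : R) (x : V -> R) (s : list V) :
  (forall w, 0 <= x w) -> lsum x s = 1 ->
  (forall w, In w s -> f w <= b) -> bary f x s <= b.
Proof.
  intros Hpos Hmass Hf. unfold bary.
  rewrite <- (Rmult_1_r b), <- Hmass, <- lsum_scal.
  apply lsum_le; intros w Hw. apply Rmult_le_compat_r; auto.
Qed.

Section BarycentricLipschitz.
Variable V : Type.
Variable K : SComplex V.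
Variable f : V -> R.
Variable c : R.
Hypothesis f_osc : forall s, simplex K s -> forall u v, In u s -> In v s -> f u - f v <= c.

Lemma bary_step_le (s : list V) (x a : V -> R) :
  in_simplex K s x -> in_simplex K s a ->
  Rabs (bary f x s - bary f a s) <= c * d_simplex s x a.
Proof.
  intros [Hs [_ [_ [_ Hx]]]] [_ [_ [_ [_ Ha]]]].
  destruct (list_argmin f s (simplex_nonempty K Hs)) as [m [Hm Hmin]].
  unfold bary. rewrite (lsum_shift_diff f x a (f m + c / 2)) by congruence.
  eapply Rle_trans; [apply lsum_abs|].
  unfold d_simplex. rewrite <- Rmult_assoc, <- lsum_scal.
  apply lsum_le; intros u Hu. rewrite Rabs_mult.
  apply Rmult_le_compat_r; [apply Rabs_pos|].
  specialize (Hmin u Hu). specialize (f_osc s Hs u m Hu Hm).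
  apply Rabs_le; lra.
Qed.

Lemma bary_point_indep (s1 s2 : list V) (x : V -> R) :
  in_simplex K s1 x -> in_simplex K s2 x -> bary f x s1 = bary f x s2.
Proof.
  intros [_ [N1 [_ [H1 _]]]] [_ [N2 [_ [H2 _]]]].
  apply lsum_support_indep; auto; intros u Hu;
    [apply H1|apply H2]; intro E; apply Hu; rewrite E; ring.
Qed.

Lemma bary_path_le (x y : V -> R) (L : R) :
  is_path K x y L -> forall sx sy, in_simplex K sx x -> in_simplex K sy y ->
  Rabs (bary f x sx - bary f y sy) <= c * L.
Proof.
  induction 1 as [x Hx | x a y s L Hxs Has Hpath IH];
    intros sx sy Hx' Hy.
  - rewrite (bary_point_indep sx sy x Hx' Hy), Rminus_diag, Rabs_R0. lra.
  - rewrite (bary_point_indep sx s x Hx' Hxs).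
    specialize (IH s sy Has Hy).
    pose proof (bary_step_le s x a Hxs Has) as Hstep.
    replace (bary f x s - bary f y sy)
      with ((bary f x s - bary f a s) + (bary f a s - bary f y sy)) by ring.
    eapply Rle_trans; [apply Rabs_triang|]. lra.
Qed.
End BarycentricLipschitz.

(* A path between points with disjoint supports has length at least 1:
   the indicator of supp(x) has oscillation 1, takes the value 1 at x and
   the value 0 at y. *)
Lemma path_length_ge_one {V : Type} (K : SComplex V) (x y : V -> R)
  (sx sy : list V) (L : R) :
  in_simplex K sx x -> in_simplex K sy y -> (forall u, x u <> 0 -> y u = 0) ->
  is_path K x y L -> 1 <= L.
Proof.
  intros Hx Hy Hdisj Hpath.
  set (ind := fun w => if Req_EM_T (x w) 0 then 0 else 1).
  assert (Hosc : forall s, simplex K s ->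
            forall u v, In u s -> In v s -> ind u - ind v <= 1).
  { intros s _ u v _ _; unfold ind.
    destruct (Req_EM_T (x u) 0), (Req_EM_T (x v) 0); lra. }
  assert (Hbx : bary ind x sx = 1).
  { destruct Hx as [_ [_ [_ [_ Hmass]]]]. rewrite <- Hmass.
    apply lsum_ext; intros u _; unfold ind.
    destruct (Req_EM_T (x u) 0) as [E|]; [rewrite E|]; ring. }
  assert (Hby : bary ind y sy = 0).
  { unfold bary; rewrite <- (Rmult_0_l (lsum y sy)), <- lsum_scal.
    apply lsum_ext; intros u _; unfold ind.
    destruct (Req_EM_T (x u) 0); [|rewrite Hdisj by assumption]; ring. }
  pose proof (bary_path_le V K ind 1 Hosc x y L Hpath sx sy Hx Hy) as Hlip.
  rewrite Hbx, Hby, Rminus_0_r, Rabs_R1 in Hlip. lra.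
Qed.

Lemma Dhat_as_bary {V : Type} (dh : V -> V -> R) (x y : V -> R) (sx sy : list V) :
  Dhat dh x sx y sy = bary (fun u => bary (dh u) y sy) x sx.
Proof.
  unfold Dhat, bary. apply lsum_ext; intros u _.
  rewrite Rmult_comm, <- lsum_scal. apply lsum_ext; intros v _. ring.
Qed.

Lemma dG_edge {V : Type} (K : SComplex V) (u v : V) :
  u <> v -> simplex K [u; v] -> dG_is K u v 1.
Proof.
  intros Hne Hedge. split.
  - apply walk_cons with v; [exact Hedge | constructor].
  - intros m Hm. inversion Hm; subst; [congruence | apply le_n_S, Nat.le_0_l].
Qed.

Lemma le_dX_scaled {V : Type} (K : SComplex V) (x y : V -> R) (d a k : R) :
  0 < k -> dX_is K x y d -> (forall L, is_path K x y L -> a <= k * L) ->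
  a <= k * d.
Proof.
  intros Hk [_ Hinf] Hbound.
  assert (a / k <= d).
  { apply Hinf; intros L HL. specialize (Hbound L HL).
    apply Rmult_le_reg_l with k; auto.
    replace (k * (a / k)) with a by (field; lra). exact Hbound. }
  replace a with (k * (a / k)) by (field; lra).
  apply Rmult_le_compat_l; lra.
Qed.

Section ComparisonMetric.
Variable V : Type.
Variable K : SComplex V.
Variable dh : V -> V -> R.
Variable C : R.
Hypothesis dh_metric : is_metric dh.
Hypothesis C_pos : 0 < C.
Hypothesis dh_le_dG : forall u v n, dG_is K u v n -> dh u v <= C * INR n.

Lemma dh_le_on_simplex (s : list V) (u v : V) :
  simplex K s -> In u s -> In v s -> dh u v <= C.
Proof.
  intros Hs Hu Hv. destruct dh_metric as [_ [Hzero _]].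
  destruct (classic (u = v)) as [<-|Hne].
  - assert (dh u u = 0) by (apply Hzero; reflexivity). lra.
  - assert (Hedge : simplex K [u; v]).
    { apply (simplex_sub K Hs); [discriminate|].
      intros z [<-|[<-|[]]]; assumption. }
    pose proof (dh_le_dG u v 1 (dG_edge K u v Hne Hedge)) as Hle.
    simpl in Hle. lra.
Qed.

Lemma dh_oscillation (u : V) :
  forall s, simplex K s -> forall a b, In a s -> In b s -> dh u a - dh u b <= C.
Proof.
  intros s Hs a b Ha Hb. destruct dh_metric as [_ [_ [Hsym Htri]]].
  pose proof (Htri u b a). rewrite (Hsym b a) in *.
  pose proof (dh_le_on_simplex s a b Hs Ha Hb). lra.
Qed.

Lemma bary_dh_le_path (x y : V -> R) (sx sy : list V) (u : V) (L : R) :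
  in_simplex K sx x -> in_simplex K sy y -> In u sx -> is_path K x y L ->
  bary (dh u) y sy <= C * (1 + L).
Proof.
  intros Hx Hy Hu Hpath.
  assert (Hbx : bary (dh u) x sx <= C).
  { destruct Hx as [Hs [_ [Hpos [_ Hmass]]]].
    apply bary_le; auto. intros w Hw. exact (dh_le_on_simplex sx u w Hs Hu Hw). }
  pose proof (bary_path_le V K (dh u) C (dh_oscillation u) x y L Hpath sx sy Hx Hy)
    as Hlip.
  pose proof (Rle_abs (bary (dh u) y sy - bary (dh u) x sx)).
  rewrite Rabs_minus_sym in Hlip. lra.
Qed.

Lemma Dhat_le_path (x y : V -> R) (sx sy : list V) (L : R) :
  in_simplex K sx x -> in_simplex K sy y -> is_path K x y L ->
  Dhat dh x sx y sy <= C * (1 + L).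
Proof.
  intros Hx Hy Hpath. rewrite Dhat_as_bary.
  pose proof Hx as [_ [_ [Hpos [_ Hmass]]]].
  apply bary_le; auto. intros u Hu. exact (bary_dh_le_path x y sx sy u L Hx Hy Hu Hpath).
Qed.
End ComparisonMetric.

Theorem mainTheorem5 (V : Type) (K : SComplex V) (dh : V -> V -> R) (C : R)
  (hmet : is_metric dh) (hC : 0 < C)
  (hdG : forall u v n, dG_is K u v n -> dh u v <= C * INR n)
  (x y : V -> R) (sx sy : list V)
  (hx : in_simplex K sx x) (hy : in_simplex K sy y)
  (hdisj : forall u, x u <> 0 -> y u = 0)
  (d : R) (hd : dX_is K x y d) :
  Dhat dh x sx y sy <= 3 * C * d.
Proof.
  apply (le_dX_scaled K x y d); [lra | exact hd |].
  intros L Hpath.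
  pose proof (Dhat_le_path V K dh C hmet hC hdG x y sx sy L hx hy Hpath).
  pose proof (path_length_ge_one K x y sx sy L hx hy hdisj Hpath).
  assert (0 <= C * (L - 1)) by (apply Rmult_le_pos; lra).
  lra.
Qed.
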